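(* Let $G=(V,E)$ be a finite connected graph (loops allowed) and let $W_0=(G,w^0)$ and $W_1=(G,w^1)$ be two networks on $G$ such that there is a vertex $v\in V$ with $w^0_{v,v}<w^1_{v,v}$, and $w^0_{u,x}=w^1_{u,x}$ for every other edge $(u,x)\neq(v,v)$. Denote by $\gamma^0$ and $\gamma^1$ the spectral gaps of the random walks on $W_0$ and $W_1$ respectively. Then $\gamma^1\le\gamma^0$.
   Context: A network $(G,w)$ is a connected graph with nonnegative edge weights $w$ (including possibly weights $w_{v,v}$ on self-loops). The random walk on it moves from $u$ to $x$ with probability proportional to $w_{u,x}$; its stationary distribution is $\pi(u)=w_u/Z$ with $w_u=\sum_{e\ni u}w_e$ and $Z=\sum_u w_u$. The spectral gap is $1-\lambda_2$, where $\lambda_2$ is the second largest eigenvalue of the (reversible) transition matrix. *)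

From HB Require Import structures.
From mathcomp Require Import all_boot all_order all_algebra.
From mathcomp Require Import polyrcf.
Set Implicit Arguments. Unset Strict Implicit. Unset Printing Implicit Defensive.
Import Order.TTheory GRing.Theory Num.Theory.
Local Open Scope ring_scope.

(* Vertices are 'I_n.  A graph is an adjacency relation G (loops allowed);
   edge weights are a function w : 'I_n -> 'I_n -> R, with w u x = w_{u,x}. *)

Definition sym_graph n (G : rel 'I_n) := forall u x, G u x = G x u.
Definition connected_graph n (G : rel 'I_n) := forall u x, connect G u x.

(* w_u = sum_{e ∋ u} w_e (a loop at u contributes w_{u,u} once) *)
Definition wdeg (R : numDomainType) n (w : 'I_n -> 'I_n -> R) (u : 'I_n) : R :=
  \sum_(x < n) w u x.

(* (G,w) is a network: nonnegative symmetric weights supported on the edges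
   of G; we also require w_u > 0 so that the random walk is well defined. *)
Definition is_network (R : numDomainType) n (G : rel 'I_n)
    (w : 'I_n -> 'I_n -> R) :=
  [/\ forall u x, w u x = w x u,
      forall u x, 0 <= w u x,
      forall u x, w u x != 0 -> G u x
    & forall u, 0 < wdeg w u].

Definition transition (R : numFieldType) n (w : 'I_n -> 'I_n -> R) : 'M[R]_n :=
  \matrix_(u, x) (w u x / wdeg w u).

Definition eigenvalues (R : rcfType) n (A : 'M[R]_n) : seq R :=
  flatten [seq nseq (mup x (char_poly A)) x | x <- rootsR (char_poly A)].

Definition lambda2 (R : rcfType) n (A : 'M[R]_n) : R :=
  nth 0 (sort (fun x y : R => y <= x) (eigenvalues A)) 1.

Definition spectral_gap (R : rcfType) n (w : 'I_n -> 'I_n -> R) : R :=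
  1 - lambda2 (transition w).

From HB Require Import structures.
From mathcomp Require Import all_boot all_order all_algebra.
From mathcomp Require Import polyrcf complex spectral sesquilinear.
From mathcomp Require Import ring.
Import Order.TTheory GRing.Theory Num.Theory.
Local Open Scope ring_scope.
Local Open Scope sesquilinear_scope.
Set Implicit Arguments. Unset Strict Implicit. Unset Printing Implicit Defensive.

(* The transition matrix D^-1 W of a network is similar to the symmetric matrix
   D^-1/2 W D^-1/2, so its eigenvalues are real and, by Courant-Fischer, lambda2 is
   both a max-min and a min-max of the Rayleigh quotient <x W, x> / <x D, x>.
   Raising the loop weight at v by d > 0 adds d |x_v|^2 to the numerator and to the
   denominator; since <x W, x> <= <x D, x> (the Laplacian D - W is positive
   semidefinite), this cannot decrease the quotient. *)


Lemma char_poly_conj (R : comNzRingType) n (P Q A : 'M[R]_n) :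
  Q *m P = 1%:M -> char_poly (Q *m A *m P) = char_poly A.
Proof.
move=> QP; rewrite /char_poly /char_poly_mx.
have QPC : map_mx polyC Q *m map_mx polyC P = 1%:M by rewrite -map_mxM QP map_mx1.
transitivity (\det (map_mx polyC Q *m ('X%:M - map_mx polyC A) *m map_mx polyC P)).
  rewrite mulmxBr mulmxBl -[_ *m 'X%:M *m _]mulmxA -scalar_mxC.
  by rewrite mulmxA QPC mul1mx !map_mxM.
by rewrite !det_mulmx mulrAC -det_mulmx QPC det1 mul1r.
Qed.

Section SecondLargest.
Variable R : realDomainType.

Definition second_largest n (r : 'I_n -> R) : R :=
  nth 0 (sort (fun x y : R => y <= x) [seq r i | i <- enum 'I_n]) 1.

Lemma sorted_ge_count_gt (s : seq R) :
  sorted (fun x y : R => y <= x) s -> (count (fun x => (nth 0 s 1 < x)%R) s <= 1)%N.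
Proof.
case: s => [|a [|b l]] //=; first by case: (_ < a).
case/andP=> _ b_path; rewrite ltxx add0n (@eq_in_count _ _ pred0) ?count_pred0.
  by case: (_ < _).
move=> x x_l /=; apply/negbTE; rewrite -leNgt.
by have /allP := order_path_min (rev_trans le_trans) b_path; apply.
Qed.

Lemma sorted_ge_count_ge (s : seq R) :
  sorted (fun x y : R => y <= x) s -> (1 < size s)%N ->
  (1 < count (fun x => (nth 0 s 1 <= x)%R) s)%N.
Proof. by case: s => [|a [|b l]] //= /andP[-> _] _; rewrite lexx. Qed.

Variables (n : nat) (r : 'I_n -> R).

Lemma count_sort_ge_map (P : pred R) :
  count P (sort (fun x y : R => y <= x) [seq r i | i <- enum 'I_n]) =
  #|[pred i | P (r i)]|.
Proof.
rewrite (permP (permEl (perm_sort _ _))) count_map cardE /enum_mem size_filter.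
by rewrite count_filter; apply: eq_count => i; rewrite /= andbT.
Qed.

Lemma second_largest_attained_twice : (1 < n)%N ->
  exists i1 i2, [/\ i1 != i2, second_largest r <= r i1 & second_largest r <= r i2].
Proof.
move=> n_gt1.
have := sorted_ge_count_ge (sort_sorted (fun x y => le_total y x) [seq r i | i <- enum 'I_n]).
rewrite size_sort size_map size_enum_ord count_sort_ge_map => /(_ n_gt1).
by case/card_gt1P => i1 [i2 [? ? ?]]; exists i1, i2.
Qed.

Lemma second_largest_upper : (0 < n)%N ->
  exists j, forall i, i != j -> r i <= second_largest r.
Proof.
move=> n_gt0.
have := sorted_ge_count_gt (sort_sorted (fun x y => le_total y x) [seq r i | i <- enum 'I_n]).
rewrite count_sort_ge_map -/(second_largest r) => /card_le1_eqP le1.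
case: (pickP [pred i | second_largest r < r i]) => [j lt_j | none].
  exists j => i; apply: contraR; rewrite -ltNge => lt_i.
  by rewrite (le1 i j).
by exists (Ordinal n_gt0) => i _; rewrite leNgt; apply/negbT/none.
Qed.

Lemma second_largest_small : (n <= 1)%N -> second_largest r = 0.
Proof.
by move=> n_le1; rewrite /second_largest nth_default // size_sort size_map size_enum_ord.
Qed.

End SecondLargest.

Lemma count_flatten_nseq (T : eqType) (s : seq T) (f : T -> nat) y : uniq s ->
  count_mem y (flatten [seq nseq (f x) x | x <- s]) = ((y \in s) * f y)%N.
Proof.
elim: s => //= x s IHs /andP[x_notin_s s_uniq].
rewrite count_cat count_nseq IHs // in_cons eq_sym /=.
by case: (eqVneq x y) => [<-|_]; rewrite ?(negPf x_notin_s) ?addn0.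
Qed.

Lemma eigenvalues_split (R : rcfType) n (A : 'M[R]_n) (r : 'I_n -> R) :
  char_poly A = \prod_(i < n) ('X - (r i)%:P) ->
  perm_eq (eigenvalues A) [seq r i | i <- enum 'I_n].
Proof.
move=> cpA; have cpA_neq0 : char_poly A != 0 by rewrite monic_neq0 ?char_poly_monic.
apply/allP => y _; apply/eqP.
rewrite count_flatten_nseq ?uniq_roots // -mu_prod_XsubC big_map big_enum /= -cpA.
rewrite -(roots_on_rootsR cpA_neq0 y) in_itv /=.
by have [|/mupNroot ->] := boolP (root _ y); rewrite ?mul1n.
Qed.

Lemma lambda2_split (R : rcfType) n (A : 'M[R]_n) (r : 'I_n -> R) :
  char_poly A = \prod_(i < n) ('X - (r i)%:P) -> lambda2 A = second_largest r.
Proof.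
have ge_anti : antisymmetric (fun x y : R => y <= x).
  by move=> x y /andP[? ?]; apply/le_anti/andP; split.
move/eigenvalues_split.
move/(perm_sortP (fun x y => le_total y x) (rev_trans le_trans) ge_anti).
by rewrite /lambda2 /second_largest => ->.
Qed.

Section HermitianForm.
Variables (C : numClosedFieldType) (n : nat).

Lemma dotmx_sum (u v : 'rV[C]_n) : dotmx u v = \sum_i u 0 i * (v 0 i)^*.
Proof. by rewrite dotmxE mxE; apply: eq_bigr => i _; rewrite !mxE. Qed.

Lemma dotmx_unitary m (M : 'M[C]_(m, n)) (u v : 'rV[C]_m) :
  M \is unitarymx -> dotmx (u *m M) (v *m M) = dotmx u v.
Proof.
move=> /unitarymxP MMt; rewrite !dotmxE trmx_mul map_mxM.
by rewrite mulmxA -(mulmxA u) MMt mulmx1.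
Qed.

Variable A : 'M[C]_n.
Hypothesis A_herm : A \is hermsymmx.
Local Notation U := (spectralmx A).
Local Notation d := (spectral_diag A).

Lemma spectral_coordsK (y : 'rV[C]_n) : y *m U^t* *m U = y.
Proof. by rewrite -mulmxA (mulmx1C (unitarymxP (spectral_unitarymx A))) mulmx1. Qed.

Lemma hermitian_form_spectral (c : 'rV[C]_n) :
  dotmx (c *m U *m A) (c *m U) = \sum_i d 0 i * (c 0 i * (c 0 i)^*).
Proof.
have A_diag : A = U^t* *m diag_mx d *m U.
  rewrite -invmx_unitary ?spectral_unitarymx //.
  exact/orthomx_spectralP/hermitian_normalmx.
rewrite {2}A_diag !mulmxA -(mulmxA c) (unitarymxP (spectral_unitarymx A)) mulmx1.
rewrite dotmx_unitary ?spectral_unitarymx //.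
by rewrite dotmx_sum; apply: eq_bigr => i _; rewrite mul_mx_diag mxE mulrAC mulrC.
Qed.

Lemma dotmx_spectral (c : 'rV[C]_n) :
  dotmx (c *m U) (c *m U) = \sum_i c 0 i * (c 0 i)^*.
Proof. by rewrite dotmx_unitary ?spectral_unitarymx ?dotmx_sum. Qed.

Lemma hermitian_form_ge (t : C) (c : 'rV[C]_n) :
  (forall i, c 0 i = 0 \/ t <= d 0 i) ->
  t * dotmx (c *m U) (c *m U) <= dotmx (c *m U *m A) (c *m U).
Proof.
move=> c_supp; rewrite hermitian_form_spectral dotmx_spectral mulr_sumr.
apply: ler_sum => i _; have [->|t_le] := c_supp i; first by rewrite !(mul0r, mulr0).
by have := ler_wpM2r (mul_conjC_ge0 (c 0 i)) t_le.
Qed.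

Lemma hermitian_form_le (t : C) (c : 'rV[C]_n) :
  (forall i, c 0 i = 0 \/ d 0 i <= t) ->
  dotmx (c *m U *m A) (c *m U) <= t * dotmx (c *m U) (c *m U).
Proof.
move=> c_supp; rewrite hermitian_form_spectral dotmx_spectral mulr_sumr.
apply: ler_sum => i _; have [->|le_t] := c_supp i; first by rewrite !(mul0r, mulr0).
by have := ler_wpM2r (mul_conjC_ge0 (c 0 i)) le_t.
Qed.

End HermitianForm.

Lemma exists_orthogonal_in_plane (F : fieldType) n (i1 i2 : 'I_n) (h : 'cV[F]_n) :
  i1 != i2 -> exists2 c : 'rV[F]_n, c != 0 &
    c *m h = 0 /\ forall i, i != i1 -> i != i2 -> c 0 i = 0.
Proof.
move=> i12; have delta_h i : delta_mx 0 i *m h = (h i 0)%:M.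
  by apply/rowP => j; rewrite ord1 -rowE !mxE eqxx.
have [h1_0|h1_neq0] := eqVneq (h i1 0) 0.
  exists (delta_mx 0 i1); last split.
  - by apply/negP => /eqP/matrixP/(_ 0 i1); rewrite !mxE !eqxx; apply/eqP/oner_neq0.
  - by rewrite delta_h h1_0 raddf0.
  - by move=> i /negPf i_neq1 _; rewrite mxE i_neq1 andbF.
exists (h i2 0 *: delta_mx 0 i1 - h i1 0 *: delta_mx 0 i2); last split.
- apply/negP => /eqP/matrixP/(_ 0 i2); rewrite !mxE eq_sym (negPf i12) !eqxx.
  by rewrite mulr0 mulr1 sub0r; apply/eqP; rewrite oppr_eq0.
- by rewrite mulmxBl -!scalemxAl !delta_h !scale_scalar_mx mulrC subrr.
- by move=> i /negPf i_neq1 /negPf i_neq2; rewrite !mxE i_neq1 i_neq2 !andbF !mulr0 subrr.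
Qed.

Lemma conjC_real_complex (R : rcfType) (x : R) : (x%:C%C)^* = x%:C%C.
Proof. by apply/CrealP; rewrite complex_real. Qed.

Section RealSymmetric.
Variables (R : rcfType) (n : nat) (S : 'M[R]_n).
Hypothesis S_sym : S^T = S.
Local Notation Sc := (map_mx (real_complex R) S).

Lemma symmetric_complex_hermitian : Sc \is hermsymmx.
Proof.
apply/is_hermitianmxP; rewrite expr0 scale1r; apply/matrixP => i j.
by rewrite !mxE conjC_real_complex -[in RHS]S_sym mxE.
Qed.

Let r i := complex.Re (spectral_diag Sc 0 i).

Lemma spectral_diag_symmetric i : spectral_diag Sc 0 i = (r i)%:C%C.
Proof.
rewrite RRe_real //; apply: (mxOverP (hermitian_spectral_diag_real _)).
exact: symmetric_complex_hermitian.
Qed.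

Lemma char_poly_symmetric : char_poly S = \prod_(i < n) ('X - (r i)%:P).
Proof.
apply: (map_poly_inj (real_complex R)); rewrite map_char_poly.
have /hermitian_normalmx/orthomx_spectralP -> := symmetric_complex_hermitian.
rewrite invmx_unitary ?spectral_unitarymx // char_poly_conj; last first.
  exact/mulmx1C/unitarymxP/spectral_unitarymx.
rewrite char_poly_trig ?diag_mx_is_trig // rmorph_prod; apply: eq_bigr => i _.
by rewrite /= map_polyXsubC mxE eqxx mulr1n spectral_diag_symmetric.
Qed.

Lemma lambda2_symmetric : lambda2 S = second_largest r.
Proof. exact: lambda2_split char_poly_symmetric. Qed.

Theorem courant_fischer_lower : (1 < n)%N -> forall g : 'cV[R[i]]_n,
  exists y : 'rV_n, [/\ y != 0, y *m g = 0 &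
    (lambda2 S)%:C%C * dotmx y y <= dotmx (y *m Sc) y].
Proof.
move=> n_gt1 g; have [i1 [i2 [i12 le1 le2]]] := second_largest_attained_twice r n_gt1.
have [c c_neq0 [cg c_supp]] := exists_orthogonal_in_plane (spectralmx Sc *m g) i12.
exists (c *m spectralmx Sc); split.
- apply: contraNneq c_neq0 => cU0.
  by rewrite -[c]mulmx1 -(unitarymxP (spectral_unitarymx Sc)) mulmxA cU0 mul0mx.
- by rewrite -mulmxA.
rewrite lambda2_symmetric; apply: (hermitian_form_ge symmetric_complex_hermitian) => i.
rewrite spectral_diag_symmetric lecR.
have [->|i_neq1] := eqVneq i i1; first by right.
have [->|i_neq2] := eqVneq i i2; first by right.
by left; apply: c_supp.
Qed.

Theorem courant_fischer_upper : (0 < n)%N ->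
  exists g : 'cV[R[i]]_n, forall y, y *m g = 0 ->
    dotmx (y *m Sc) y <= (lambda2 S)%:C%C * dotmx y y.
Proof.
move=> n_gt0; have [j j_max] := second_largest_upper r n_gt0.
exists (col j ((spectralmx Sc)^t*)) => y yg.
rewrite -(spectral_coordsK Sc y) lambda2_symmetric.
apply: (hermitian_form_le symmetric_complex_hermitian) => i.
have [->|i_neq_j] := eqVneq i j; last by right; rewrite spectral_diag_symmetric lecR j_max.
by left; move/matrixP/(_ 0 0): yg; rewrite colE mulmxA -colE !mxE.
Qed.

End RealSymmetric.

(* Complex row vectors, because the spectral theorem of spectral.v is stated over a
   numClosedFieldType. *)
Definition cform (R : rcfType) n (M : 'M[R]_n) (x : 'rV[R[i]]_n) : R[i] :=
  dotmx (x *m map_mx (real_complex R) M) x.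

Section ComplexifiedForm.
Variables (R : rcfType) (n : nat).

Lemma cformD (M N : 'M[R]_n) x : cform (M + N) x = cform M x + cform N x.
Proof. by rewrite /cform !dotmxE map_mxD mulmxDr mulmxDl mxE. Qed.

Lemma cform_diag (d : 'rV[R]_n) x :
  cform (diag_mx d) x = \sum_u (d 0 u)%:C%C * (x 0 u * (x 0 u)^*).
Proof.
rewrite /cform map_diag_mx mul_mx_diag dotmx_sum.
by apply: eq_bigr => u _; rewrite !mxE mulrAC mulrC.
Qed.

Lemma cform_diag_ge0 (d : 'rV[R]_n) x :
  (forall u, 0 <= d 0 u) -> 0 <= cform (diag_mx d) x.
Proof.
move=> d_ge0; rewrite cform_diag; apply: sumr_ge0 => u _.
by rewrite mulr_ge0 ?mul_conjC_ge0 ?ler0c.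
Qed.

Lemma cform_sum (M : 'M[R]_n) x :
  cform M x = \sum_u \sum_t (M u t)%:C%C * (x 0 u * (x 0 t)^*).
Proof.
rewrite /cform dotmx_sum; under eq_bigr do rewrite mxE big_distrl.
rewrite exchange_big; apply: eq_bigr => u _; apply: eq_bigr => t _ /=.
by rewrite !mxE mulrCA mulrA.
Qed.

Lemma cform_conj_diag (D M : 'M[R]_n) x : D^T = D ->
  dotmx (x *m map_mx (real_complex R) D *m map_mx (real_complex R) M)
        (x *m map_mx (real_complex R) D) = cform (D *m M *m D) x.
Proof.
move=> D_sym; have DcC : (map_mx (real_complex R) D)^t* = map_mx (real_complex R) D.
  by apply/matrixP => i j; rewrite !mxE conjC_real_complex -[in RHS]D_sym mxE.
by rewrite /cform !dotmxE trmx_mul map_mxM DcC !map_mxM !mulmxA.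
Qed.

End ComplexifiedForm.

Section Network.
Variables (R : rcfType) (n : nat) (w : 'I_n -> 'I_n -> R).

Definition adjmx : 'M[R]_n := \matrix_(u, t) w u t.
Definition degmx : 'M[R]_n := diag_mx (\row_u wdeg w u).
Definition sqrt_degmx : 'M[R]_n := diag_mx (\row_u Num.sqrt (wdeg w u)).
Definition inv_sqrt_degmx : 'M[R]_n := diag_mx (\row_u (Num.sqrt (wdeg w u))^-1).
Definition normalized_adjmx : 'M[R]_n := inv_sqrt_degmx *m adjmx *m inv_sqrt_degmx.

Hypothesis w_sym : forall u t, w u t = w t u.

Lemma adjmx_sym : adjmx^T = adjmx.
Proof. by apply/matrixP => u t; rewrite !mxE w_sym. Qed.

Lemma cform_adjmx_le_degmx x : (forall u t, 0 <= w u t) ->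
  cform adjmx x <= cform degmx x.
Proof.
move=> w_ge0; suff : cform adjmx x *+ 2 <= cform degmx x *+ 2 by rewrite ler_pMn2r.
rewrite cform_sum cform_diag.
have sym2 (F : 'I_n -> 'I_n -> R[i]) :
    (\sum_u \sum_t F u t) *+ 2 = \sum_u \sum_t (F u t + F t u).
  rewrite mulr2n {2}exchange_big -big_split; apply: eq_bigr => u _.
  by rewrite -big_split.
under [in X in _ <= X]eq_bigr do rewrite mxE rmorph_sum big_distrl.
rewrite !sym2; apply: ler_sum => u _; apply: ler_sum => t _.
rewrite !mxE [w t u]w_sym -!mulrDr ler_wpM2l ?ler0c // -subr_ge0.
have -> : x 0 u * (x 0 u)^* + x 0 t * (x 0 t)^* - (x 0 u * (x 0 t)^* + x 0 t * (x 0 u)^*)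
    = (x 0 u - x 0 t) * (x 0 u - x 0 t)^* by rewrite rmorphB /=; ring.
exact: mul_conjC_ge0.
Qed.

Hypothesis wdeg_gt0 : forall u, 0 < wdeg w u.

Lemma sqrt_wdeg_neq0 u : Num.sqrt (wdeg w u) != 0.
Proof. by rewrite sqrtr_eq0 -ltNge. Qed.

Lemma inv_sqrt_degmxK : inv_sqrt_degmx *m sqrt_degmx = 1%:M.
Proof.
rewrite mulmx_diag -diag_const_mx; congr diag_mx; apply/rowP => u.
by rewrite !mxE mulVf ?sqrt_wdeg_neq0.
Qed.

Lemma sqrt_degmxK : sqrt_degmx *m inv_sqrt_degmx = 1%:M.
Proof.
rewrite mulmx_diag -diag_const_mx; congr diag_mx; apply/rowP => u.
by rewrite !mxE mulfV ?sqrt_wdeg_neq0.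
Qed.

Lemma adjmx_normalized : sqrt_degmx *m normalized_adjmx *m sqrt_degmx = adjmx.
Proof.
by rewrite /normalized_adjmx !mulmxA sqrt_degmxK mul1mx -mulmxA inv_sqrt_degmxK mulmx1.
Qed.

Lemma degmx_sqrt : sqrt_degmx *m 1%:M *m sqrt_degmx = degmx.
Proof.
rewrite mulmx1 mulmx_diag; congr diag_mx; apply/rowP => u.
by rewrite !mxE -expr2 sqr_sqrtr ?ltW.
Qed.

Lemma normalized_adjmx_sym : normalized_adjmx^T = normalized_adjmx.
Proof. by rewrite /normalized_adjmx !trmx_mul tr_diag_mx adjmx_sym mulmxA. Qed.

Lemma transition_normalized :
  transition w = inv_sqrt_degmx *m normalized_adjmx *m sqrt_degmx.
Proof.
rewrite /normalized_adjmx -!mulmxA inv_sqrt_degmxK mulmx1 mulmxA.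
apply/matrixP => u t; rewrite mulmx_diag mul_diag_mx !mxE -invfM -expr2.
by rewrite sqr_sqrtr ?ltW // mulrC.
Qed.

Lemma lambda2_transition : lambda2 (transition w) = lambda2 normalized_adjmx.
Proof.
by rewrite /lambda2 /eigenvalues transition_normalized char_poly_conj ?inv_sqrt_degmxK.
Qed.

Lemma lambda2_transition_small : (n <= 1)%N -> lambda2 (transition w) = 0.
Proof.
move=> n_le1.
by rewrite lambda2_transition (lambda2_symmetric normalized_adjmx_sym) second_largest_small.
Qed.

Local Notation complexify := (map_mx (real_complex R)).

Lemma cform_adjmx_normalized x : cform adjmx x =
  dotmx (x *m complexify sqrt_degmx *m complexify normalized_adjmx)
        (x *m complexify sqrt_degmx).
Proof. by rewrite -adjmx_normalized; apply/esym/cform_conj_diag/tr_diag_mx. Qed.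

Lemma cform_degmx_sqrt x :
  cform degmx x = dotmx (x *m complexify sqrt_degmx) (x *m complexify sqrt_degmx).
Proof.
by rewrite -degmx_sqrt -(cform_conj_diag 1%:M x (tr_diag_mx _)) map_mx1 mulmx1.
Qed.

Theorem network_courant_fischer_lower : (1 < n)%N -> forall g : 'cV[R[i]]_n,
  exists x, [/\ x *m g = 0, 0 < cform degmx x &
    (lambda2 (transition w))%:C%C * cform degmx x <= cform adjmx x].
Proof.
move=> n_gt1 g; have [y [y_neq0 yg le_y]] := courant_fischer_lower
  normalized_adjmx_sym n_gt1 (complexify inv_sqrt_degmx *m g).
have yK : y *m complexify inv_sqrt_degmx *m complexify sqrt_degmx = y.
  by rewrite -mulmxA -map_mxM inv_sqrt_degmxK map_mx1 mulmx1.
exists (y *m complexify inv_sqrt_degmx).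
by rewrite -mulmxA cform_degmx_sqrt cform_adjmx_normalized lambda2_transition yK
  dotmx_is_dotmx.
Qed.

Theorem network_courant_fischer_upper : (0 < n)%N ->
  exists g : 'cV[R[i]]_n, forall x, x *m g = 0 ->
    cform adjmx x <= (lambda2 (transition w))%:C%C * cform degmx x.
Proof.
move=> n_gt0; have [g upper] := courant_fischer_upper normalized_adjmx_sym n_gt0.
exists (complexify sqrt_degmx *m g) => x xg.
rewrite cform_degmx_sqrt cform_adjmx_normalized lambda2_transition.
by apply: upper; rewrite -mulmxA.
Qed.

End Network.

(* l0 <= W / D <= (W + E) / (D + E) <= l1 in cross-multiplied form; the middle
   step is where W <= D is needed. *)
Lemma ler_quotient_shift (F : numDomainType) (l0 l1 W D E : F) :
  0 < D -> 0 <= E -> W <= D -> l0 * D <= W -> W + E <= l1 * (D + E) -> l0 <= l1.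
Proof.
move=> D_gt0 E_ge0 W_le_D lower upper.
have DE_gt0 : 0 < D + E by apply: lt_le_trans D_gt0 _; rewrite lerDl.
rewrite -(ler_pM2r (mulr_gt0 D_gt0 DE_gt0)) !mulrA.
apply: (le_trans (y := W * (D + E))); first by rewrite ler_pM2r.
apply: (le_trans (y := (W + E) * D)).
  by rewrite mulrDr mulrDl lerD2l mulrC; apply: ler_wpM2l.
by rewrite mulrAC ler_pM2r.
Qed.

Section AddLoops.
Variables (R : rcfType) (n : nat) (w0 w1 : 'I_n -> 'I_n -> R) (e : 'rV[R]_n).
Hypotheses (w0_sym : forall u t, w0 u t = w0 t u) (w0_ge0 : forall u t, 0 <= w0 u t).
Hypotheses (w1_sym : forall u t, w1 u t = w1 t u).
Hypotheses (wdeg0_gt0 : forall u, 0 < wdeg w0 u) (wdeg1_gt0 : forall u, 0 < wdeg w1 u).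
Hypotheses (e_ge0 : forall u, 0 <= e 0 u) (adjmx_w1 : adjmx w1 = adjmx w0 + diag_mx e).

Lemma degmx_add_loops : degmx w1 = degmx w0 + diag_mx e.
Proof.
rewrite /degmx -raddfD /=; congr diag_mx; apply/rowP => u; rewrite !mxE /wdeg.
have w1E t : w1 u t = w0 u t + e 0 u *+ (u == t).
  by move/matrixP/(_ u t): adjmx_w1; rewrite !mxE.
under eq_bigr do rewrite w1E; rewrite big_split /=; congr (_ + _).
rewrite (bigD1 u) //= eqxx big1 ?addr0 // => t.
by rewrite eq_sym => /negPf ->.
Qed.

Theorem lambda2_transition_add_loops :
  lambda2 (transition w0) <= lambda2 (transition w1).
Proof.
have [n_le1|n_gt1] := leqP n 1; first by rewrite !lambda2_transition_small.
have [g upper1] := network_courant_fischer_upper w1_sym wdeg1_gt0 (ltnW n_gt1).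
have [x [xg D0_gt0 lower0]] := network_courant_fischer_lower w0_sym wdeg0_gt0 n_gt1 g.
have := upper1 x xg; rewrite -lecR adjmx_w1 degmx_add_loops !cformD.
apply: ler_quotient_shift D0_gt0 _ _ lower0; first exact: cform_diag_ge0.
exact: cform_adjmx_le_degmx.
Qed.

End AddLoops.

Theorem claim2p7 (R : rcfType) (n : nat) (G : rel 'I_n)
    (w0 w1 : 'I_n -> 'I_n -> R) (v : 'I_n) :
  sym_graph G -> connected_graph G ->
  is_network G w0 -> is_network G w1 ->
  w0 v v < w1 v v ->
  (forall u x, (u, x) != (v, v) -> w0 u x = w1 u x) ->
  spectral_gap w1 <= spectral_gap w0.
Proof.
move=> _ _ [w0_sym w0_ge0 _ wdeg0_gt0] [w1_sym _ _ wdeg1_gt0] lt_vv w_eq.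
rewrite /spectral_gap lerD2l lerN2.
pose e : 'rV[R]_n := (w1 v v - w0 v v) *: delta_mx 0 v.
apply: (lambda2_transition_add_loops (e := e)) => //.
  by move=> u; rewrite !mxE mulr_ge0 ?ler0n // subr_ge0 ltW.
apply/matrixP => u t; rewrite !mxE eqxx /=.
have [[-> ->]|uv_neq] := eqVneq (u, t) (v, v); first by rewrite !eqxx mulr1 addrC subrK.
rewrite -w_eq //; have [ut|_] := eqVneq u t; last by rewrite mulr0n addr0.
by move: uv_neq; rewrite ut xpair_eqE andbb => /negPf ->; rewrite mulr0 addr0.
Qed.
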